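(* Let $r\ge 2$ and $F\in\mathcal{F}_r(n)$. If $F\not\cong T_r(n)$, then there is a vertex $u\in V(F)$ such that \[ e\bigl(F[N_F(u)]\bigr)>e\bigl(T_{r-1}(d_F(u))\bigr). \]
   Context: $e(\cdot)$ is the number of edges; $N_F(u)$ and $d_F(u)$ are the neighborhood and degree of $u$ in $F$, and $F[X]$ is the induced subgraph. $T_k(m)$ is the complete $k$-partite graph on $m$ vertices with part sizes differing by at most one. The family $\mathcal{F}_r(n)$: write $n=ra+b$ with $0\le b<r$ and $a=\lfloor n/r\rfloor\ge 1$. If $b=0$, $\mathcal{F}_r(n)$ is the set of all $(r-1)a$-regular graphs on $n$ vertices. If $1\le b<r$, $\mathcal{F}_r(n)$ is the set of all graphs $G$ on $n$ vertices having a partition $V(G)=X\sqcup Y$ with $|X|=b(a+1)$, $|Y|=(r-b)a$, such that every vertex of $X$ is adjacent to every vertex of $Y$, $G[X]$ is $(b-1)(a+1)$-regular, and $G[Y]$ is $(r-b-1)a$-regular. *)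

From mathcomp Require Import all_boot.
Set Implicit Arguments. Unset Strict Implicit. Unset Printing Implicit Defensive.

Definition simple_graph (T : finType) (g : rel T) : Prop :=
  symmetric g /\ irreflexive g.

Definition nbhd (T : finType) (g : rel T) (u : T) : {set T} := [set v | g u v].
Definition deg (T : finType) (g : rel T) (u : T) : nat := #|nbhd g u|.
Definition deg_in (T : finType) (g : rel T) (X : {set T}) (x : T) : nat :=
  #|[set y in X | g x y]|.

Definition edges_in (T : finType) (g : rel T) (A : {set T}) : nat :=
  #|[set E : {set T} | (E \subset A) && (#|E| == 2) &&
       [forall x in E, forall y in E, (x != y) ==> g x y]]|.

(* Turán graph T_k(m) on 'I_m: parts are residue classes mod k,
   so part sizes differ by at most one. *)
Definition turan_rel (k m : nat) : rel 'I_m :=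
  fun i j : 'I_m => (nat_of_ord i %% k != nat_of_ord j %% k).

Definition turan_edges (k m : nat) : nat := edges_in (@turan_rel k m) [set: 'I_m].

Definition iso_turan (T : finType) (g : rel T) (r : nat) : Prop :=
  exists f : T -> 'I_#|T|, bijective f /\
    forall x y, g x y = @turan_rel r #|T| (f x) (f y).

Definition in_family (T : finType) (g : rel T) (r : nat) : Prop :=
  let n := #|T| in
  let a := n %/ r in
  let b := n %% r in
  1 <= a /\
  (if b == 0 then forall u, deg g u = (r - 1) * a
   else exists X : {set T},
     [/\ #|X| = b * (a + 1), #|~: X| = (r - b) * a,
         (forall x y, x \in X -> y \notin X -> g x y),
         (forall x, x \in X -> deg_in g X x = (b - 1) * (a + 1)) &
         (forall y, y \notin X -> deg_in g (~: X) y = (r - b - 1) * a)]).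

(** Double count the edges inside neighbourhoods. For every vertex u,
    2 e(F[N(u)]) = Σ_{v ∈ N(u)} |N(u) ∩ N(v)| = Σ_{v ∈ N(u)} (d(u) + d(v) - |N(u) ∪ N(v)|),
    and summing over u gives
    Σ_u 2 e(F[N(u)]) + Σ_{uv} |N(u) ∪ N(v)| = 2 Σ_u d(u)^2,
    the middle sum ranging over ordered adjacent pairs. In a graph of F_r(n)
    the degrees are n - a - 1 on X and n - a off X, and one checks
    Σ_u (2 e(T_{r-1}(d(u))) + n d(u)) = 2 Σ_u d(u)^2. So if no neighbourhood
    beats the Turán bound, then |N(u) ∪ N(v)| = n for every edge uv: non-adjacent
    vertices have the same neighbourhood and F is complete multipartite. The
    degrees then force b parts of size a + 1 (inside X) and r - b parts of
    size a, which is T_r(n). *)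

From mathcomp Require Import all_boot zify.
Set Implicit Arguments. Unset Strict Implicit. Unset Printing Implicit Defensive.

Lemma card_ord_count n (P : pred nat) :
  #|[set i : 'I_n | P i]| = count P (iota 0 n).
Proof. by rewrite -sum1dep_card -(big_mkord P (fun=> 1)) sum1_count /index_iota subn0. Qed.

Lemma count_iota_mod k q s (P : pred nat) : s <= k ->
  count (fun i => P (i %% k)) (iota 0 (q * k + s)) =
  q * count P (iota 0 k) + count P (iota 0 s).
Proof.
move=> s_le_k; elim: q => [|q IHq].
  apply: eq_in_count => i; rewrite mem_iota => /= i_lt_s.
  by rewrite modn_small // (leq_trans i_lt_s).
rewrite mulSn -addnA iotaD count_cat add0n -addnA -IHq; congr (_ + _).
  by apply: eq_in_count => i; rewrite mem_iota => /= i_lt_k; rewrite modn_small.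
by rewrite -(addn0 k) iotaDl count_map; apply: eq_count => i /=; rewrite addn0 modnDl.
Qed.

Lemma count_iota_lt s k : s <= k -> count (fun i => i < s) (iota 0 k) = s.
Proof. by move=> s_le_k; rewrite -size_filter (filter_iota_ltn 0 s_le_k) size_iota. Qed.

Lemma count_iota_eq c k : count (pred1 c) (iota 0 k) = (c < k).
Proof. by rewrite count_uniq_mem ?iota_uniq // mem_iota. Qed.

Lemma card_mod_fiber n k q s c : s <= k -> n = q * k + s ->
  #|[set i : 'I_n | i %% k == c]| = q * (c < k) + (c < s).
Proof.
move=> s_le_k n_eq; rewrite (card_ord_count _ (fun i => i %% k == c)) n_eq.
by rewrite (count_iota_mod q (pred1 c)) // !count_iota_eq.
Qed.

Lemma fiberwise_bijection (T1 T2 : finType) (L : eqType)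
    (lab1 : T1 -> L) (lab2 : T2 -> L) (y0 : T2) :
  #|T1| = #|T2| ->
  (forall c, #|[set x | lab1 x == c]| = #|[set y | lab2 y == c]|) ->
  exists f : T1 -> T2, bijective f /\ forall x, lab2 (f x) = lab1 x.
Proof.
move=> eq_card12 eq_fiber.
pose A c := enum [set x | lab1 x == c]; pose B c := enum [set y | lab2 y == c].
pose f x := nth y0 (B (lab1 x)) (index x (A (lab1 x))).
have index_lt x : index x (A (lab1 x)) < size (B (lab1 x)).
  by rewrite -cardE -eq_fiber cardE index_mem mem_enum inE.
have lab_f x : lab2 (f x) = lab1 x.
  by have := mem_nth y0 (index_lt x); rewrite mem_enum inE => /eqP.
exists f; split=> //; apply: inj_card_bij => [x x' fxx'|]; last by rewrite eq_card12.
have lab_xx' : lab1 x = lab1 x' by rewrite -lab_f fxx' lab_f.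
have x_lt := index_lt x; rewrite lab_xx' in x_lt.
move: fxx'; rewrite /f lab_xx' => /eqP; rewrite nth_uniq ?enum_uniq ?index_lt //.
by move=> /eqP /(index_inj x); apply; rewrite /A mem_enum inE ?lab_xx'.
Qed.

Section SimpleGraph.

Variables (T : finType) (g : rel T).
Hypotheses (gs : symmetric g) (gi : irreflexive g).
Local Notation N := (nbhd g).
Local Notation d := (deg g).

Lemma deg_split (X : {set T}) x : d x = deg_in g X x + deg_in g (~: X) x.
Proof.
rewrite /deg -(cardsID X); congr (_ + _); apply: eq_card => y; rewrite !inE //.
exact: andbC.
Qed.

Local Definition edge_set (A : {set T}) : {set {set T}} :=
  [set E : {set T} | (E \subset A) && (#|E| == 2) &&
                     [forall x in E, forall y in E, (x != y) ==> g x y]].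

Lemma pair_in_edge_set (A : {set T}) x y :
  ([set x; y] \in edge_set A) = [&& x \in A, y \in A & g x y].
Proof.
rewrite inE subUset !sub1set cards2.
have [->|xy] := eqVneq x y; first by rewrite gi !andbF.
apply/idP/idP => [/andP[/andP[/andP[-> ->] _] /forall_inP gE] | /and3P[-> -> gxy]].
  by have /forall_inP/(_ y (set22 x y)) := gE x (set21 x y); rewrite xy.
rewrite /=; apply/forall_inP => u /set2P[]->; apply/forall_inP => w /set2P[]->;
  by rewrite ?eqxx ?gxy ?implybT // gs gxy implybT.
Qed.

Lemma deg_in_incident (A : {set T}) x :
  x \in A -> deg_in g A x = #|[set E in edge_set A | x \in E]|.
Proof.
move=> xA; transitivity #|[set [set x; y] | y in [set y in A | g x y]]|.
  rewrite card_in_imset // => y z /[!inE] /andP[_ gxy] /andP[_ gxz] /setP/(_ y).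
  rewrite !inE eqxx orbT => /esym/orP[/eqP yx|/eqP //].
  by rewrite yx gi in gxy.
apply: eq_card => E; apply/imsetP/setIdP => [[y /setIdP[yA gxy] ->]|[EA xE]].
  by rewrite pair_in_edge_set xA yA gxy set21.
have /cards2P[y [z [_ Eyz]]] : #|E| == 2 by move: EA; rewrite inE => /andP[/andP[]].
rewrite {}Eyz in EA xE *; case/set2P: xE EA => <-; last rewrite setUC.
all: rewrite pair_in_edge_set => /and3P[_ wA gxw].
all: by eexists; last reflexivity; rewrite inE wA gxw.
Qed.

Lemma handshake (A : {set T}) : 2 * edges_in g A = \sum_(x in A) deg_in g A x.
Proof.
rewrite (eq_bigr _ (@deg_in_incident A)); under eq_bigr do rewrite -sum1_card.
rewrite (exchange_big_dep (mem (edge_set A))) /=; last by move=> x E _ /setIdP[].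
transitivity (\sum_(E in edge_set A) 2); first by rewrite sum_nat_const mulnC.
apply: eq_bigr => E EA; move: (EA); rewrite inE => /andP[/andP[sub_EA /eqP card_E] _].
rewrite sum1dep_card -card_E; apply: eq_card => x; rewrite [in RHS]inE.
apply/idP/andP => [xE|[_ /setIdP[] //]].
by split; [exact: (subsetP sub_EA) | exact/setIdP].
Qed.

Lemma twice_edges_nbhd u :
  2 * edges_in g (N u) + \sum_(v in N u) #|N u :|: N v| =
  d u * d u + \sum_(v in N u) d v.
Proof.
rewrite handshake -big_split /=.
transitivity (\sum_(v in N u) (d u + d v)); last by rewrite big_split sum_nat_const.
apply: eq_bigr => v _; rewrite /deg -cardsUI addnC; congr (_ + _).
by apply: eq_card => w; rewrite !inE andbC.
Qed.

Lemma sum_deg_nbhd : \sum_u \sum_(v in N u) d v = \sum_u d u * d u.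
Proof.
rewrite (exchange_big_dep predT) //=; apply: eq_bigr => v _.
by rewrite -sum_nat_const; apply: eq_bigl => u; rewrite !inE gs.
Qed.

Lemma nbhd_cover :
  \sum_u (2 * edges_in g (N u) + #|T| * d u) <= \sum_u 2 * (d u * d u) ->
  forall u v, g u v -> N u :|: N v = setT.
Proof.
have sum_pairs F :
    \sum_u \sum_(v in N u) F u v = \sum_(p | p.2 \in N p.1) F p.1 p.2.
  by rewrite pair_big_dep.
have sum_nbhd : \sum_u 2 * edges_in g (N u) +
    \sum_(p | p.2 \in N p.1) #|N p.1 :|: N p.2| = \sum_u 2 * (d u * d u).
  rewrite -(sum_pairs (fun u v => #|N u :|: N v|)) -big_split /=.
  under eq_bigr do rewrite twice_edges_nbhd.
  rewrite big_split sum_deg_nbhd -big_split /=.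
  by apply: eq_bigr => u _; rewrite addnn mul2n.
have /leqif_sum le_cardU : forall p : T * T, p.2 \in N p.1 ->
    #|N p.1 :|: N p.2| <= #|T| ?= iff (#|N p.1 :|: N p.2| == #|T|).
  by move=> p _; apply/leqif_eq/max_card.
have sum_const : \sum_u #|T| * d u = \sum_(p | p.2 \in N p.1) #|T|.
  by rewrite -(sum_pairs (fun _ _ => #|T|)); apply: eq_bigr => u _; rewrite sum_nat_const mulnC.
rewrite big_split /= sum_const -sum_nbhd leq_add2l => ge_cardU u v guv.
have /forall_inP/(_ (u, v)) : [forall (p | p.2 \in N p.1), #|N p.1 :|: N p.2| == #|T|].
  by rewrite -le_cardU eqn_leq ge_cardU andbT le_cardU.
rewrite /= inE => /(_ guv) /eqP cardU.
by apply/eqP; rewrite eqEcard subsetT cardsT cardU /=.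
Qed.

Lemma cover_nonadj_nbhd :
  (forall u v, g u v -> N u :|: N v = setT) -> forall u w, ~~ g u w -> N u = N w.
Proof.
move=> cover.
suff sub u w : ~~ g u w -> N u \subset N w.
  by move=> u w nuw; apply/eqP; rewrite eqEsubset !sub // gs.
move=> nuw; apply/subsetP => x; rewrite !inE => gux.
have /setP/(_ w) := cover u x gux.
by rewrite !inE (negPf nuw) gs.
Qed.

Section CompleteMultipartite.

Hypothesis nonadj_nbhd : forall u w, ~~ g u w -> N u = N w.

(* Under [nonadj_nbhd] the graph is complete multipartite and [part x] is the
   part containing [x]. *)
Definition part x := ~: N x.

Lemma part_refl x : x \in part x.
Proof. by rewrite !inE gi. Qed.

Lemma card_part x : #|part x| + d x = #|T|.
Proof. by rewrite addnC cardsC. Qed.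

Lemma nonadj_equiv : equivalence_rel (fun x y => ~~ g x y).
Proof.
move=> x y z; split=> [|nxy]; first by rewrite gi.
by have /setP/(_ z) := nonadj_nbhd nxy; rewrite !inE => ->.
Qed.

Lemma eq_part x y : (part x == part y) = ~~ g x y.
Proof.
apply/eqP/idP => [part_xy|nxy]; last by rewrite /part (nonadj_nbhd nxy).
by have := part_refl x; rewrite part_xy !inE gs.
Qed.

Lemma mem_part x y : (y \in part x) = (part y == part x).
Proof. by rewrite eq_part !inE gs. Qed.

Lemma card_uniform_parts (D : {set T}) m :
  {in D, forall x, part x \subset D} -> {in D, forall x, #|part x| = m} ->
  #|D| = #|part @: D| * m.
Proof.
move=> part_sub size_part.
have partition_D : partition (part @: D) D.
  have -> : part @: D = equivalence_partition (fun x y => ~~ g x y) D.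
    apply: eq_in_imset => x xD; apply/setP => y; rewrite !inE.
    by rewrite andb_idl // => nxy; apply: (subsetP (part_sub x xD)); rewrite !inE.
  by apply: equivalence_partitionP => x y z _ _ _; apply: nonadj_equiv.
by apply: card_uniform_partition partition_D => _ /imsetP[x xD ->]; apply: size_part.
Qed.

Lemma index_part_fiber (s : seq {set T}) c :
  uniq s -> (forall x, part x \in s) -> {subset s <= codom part} ->
  [set x | index (part x) s == c] = nth set0 s c.
Proof.
move=> s_uniq s_part s_codom; apply/setP => x; rewrite inE.
have [c_lt|c_ge] := ltnP c (size s); last first.
  rewrite nth_default // inE; apply/negbTE; apply: contraTneq c_ge => <-.
  by rewrite -ltnNge index_mem.
have /codomP[x0 part_x0] := s_codom _ (mem_nth set0 c_lt).
have -> : (index (part x) s == c) = (part x == nth set0 s c).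
  by apply/eqP/eqP => [<-|->]; [rewrite nth_index | rewrite index_uniq].
by rewrite part_x0 mem_part.
Qed.

End CompleteMultipartite.

End SimpleGraph.

Lemma turan_sym k m : symmetric (@turan_rel k m).
Proof. by move=> i j; rewrite /turan_rel eq_sym. Qed.

Lemma turan_irrefl k m : irreflexive (@turan_rel k m).
Proof. by move=> i; rewrite /turan_rel eqxx. Qed.

Section TuranGraph.

Variables (k q s : nat).
Hypotheses (k_gt0 : 0 < k) (s_le_k : s <= k).
Local Notation m := (q * k + s).

Lemma deg_turan (i : 'I_m) : deg_in (@turan_rel k m) setT i + (q + (i %% k < s)) = m.
Proof.
have := card_mod_fiber (i %% k) s_le_k (erefl m); rewrite ltn_mod k_gt0 muln1 => <-.
rewrite addnC -[m in RHS]card_ord -(cardsC [set j : 'I_m | j %% k == i %% k]).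
by congr (_ + _); apply: eq_card => j; rewrite !inE /turan_rel eq_sym.
Qed.

Lemma turan_edges_eq : 2 * turan_edges k m + m * q + s * (q + 1) = m * m.
Proof.
have sum_small : \sum_(i < m) (i %% k < s) = q * s + s.
  transitivity #|[set i : 'I_m | i %% k < s]|.
    by rewrite -sum1dep_card [RHS]big_mkcond; apply: eq_bigr => i _; case: ifP.
  rewrite (card_ord_count _ (fun i => i %% k < s)).
  by rewrite (count_iota_mod q (fun c => c < s)) // !count_iota_lt.
have sum_deg :
    \sum_(i < m) (deg_in (@turan_rel k m) setT i + (q + (i %% k < s))) = m * m.
  by rewrite (eq_bigr _ (fun i _ => deg_turan i)) sum_nat_const card_ord.
rewrite !big_split /= sum_nat_const card_ord sum_small in sum_deg.
rewrite /turan_edges (handshake (@turan_sym k m) (@turan_irrefl k m)).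
rewrite (eq_bigl xpredT) => [|i]; last by rewrite inE.
by rewrite -sum_deg -addnA mulnDr muln1 (mulnC s).
Qed.

End TuranGraph.

Lemma in_family_split (r : nat) (T : finType) (g : rel T) :
  symmetric g -> in_family g r ->
  0 < #|T| %/ r /\
  exists X : {set T}, [/\ #|X| = #|T| %% r * (#|T| %/ r + 1),
    #|~: X| = (r - #|T| %% r) * (#|T| %/ r),
    (forall x y, x \in X -> y \notin X -> g x y) &
    forall x, deg g x + #|T| %/ r + (x \in X) = #|T|].
Proof.
move=> gs [a_gt0 shape]; split=> //.
have r_gt0 : 0 < r by move: a_gt0; case: r {shape} => //; rewrite divn0.
have n_eq := divn_eq #|T| r.
case: eqP shape => [b0 deg_eq | b_neq0 [X [cardX cardXC adjX degX degXC]]].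
  exists set0; rewrite cards0 setC0 cardsT b0.
  split=> // [|x y|x]; rewrite ?inE //; first by lia.
  by rewrite addn0 deg_eq; nia.
exists X; split=> //; move=> x; rewrite (deg_split g X).
have [xX|xXC] := boolP (x \in X).
  have -> : deg_in g (~: X) x = #|~: X|.
    by apply: eq_card => y; rewrite !inE andb_idr // => /(adjX x y xX).
  rewrite degX // cardXC; nia.
have -> : deg_in g X x = #|X|.
  by apply: eq_card => y; rewrite !inE andb_idr // => /adjX /(_ xXC); rewrite gs.
rewrite degXC ?inE // cardX; nia.
Qed.

Section TuranFamily.

Variables (r a b : nat) (T : finType) (g : rel T) (X : {set T}).
Hypotheses (r_ge2 : 2 <= r) (gs : symmetric g) (gi : irreflexive g).
Hypotheses (n_eq : #|T| = a * r + b) (b_lt_r : b < r) (a_gt0 : 0 < a).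
Hypotheses (cardX : #|X| = b * (a + 1)) (cardXC : #|~: X| = (r - b) * a).
Hypothesis adjX : forall x y, x \in X -> y \notin X -> g x y.
Hypothesis degX : forall x, deg g x + a + (x \in X) = #|T|.

Lemma twice_turan_deg x :
  2 * turan_edges (r - 1) (deg g x) + #|T| * deg g x + (x \in ~: X) * (b * (a + 1)) =
  2 * (deg g x * deg g x) + (x \in X) * ((r - b) * a).
Proof.
(* b and r are rewritten without truncated subtraction so that the final
   identities are linear in the monomials, which lia closes. *)
have := degX x; rewrite inE n_eq; have [xX|xXC] := boolP (x \in X) => /= deg_x.
  have : 0 < #|X| by apply/card_gt0P; exists x.
  rewrite cardX muln_gt0 => /andP[b_gt0 _].
  have [s b_eq] : exists s, b = s.+1 by exists b.-1; rewrite prednK.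
  have [e r_eq] : exists e, r = (s + e).+1 by exists (r - b); lia.
  have deg_eq : deg g x = a * (s + e) + s by lia.
  have k_gt0 : 0 < s + e by lia.
  have := turan_edges_eq a k_gt0 (leq_addr e s); rewrite -deg_eq.
  rewrite r_eq b_eq !subSS subn0 addKn; lia.
have [e r_eq] : exists e, r = (b + e).+1 by exists (r - b).-1; lia.
have deg_eq : deg g x = a * (b + e) + b by lia.
have k_gt0 : 0 < b + e by lia.
have := turan_edges_eq a k_gt0 (leq_addr e b); rewrite -deg_eq.
rewrite r_eq subn1 /=; lia.
Qed.

Lemma sum_twice_turan_deg :
  \sum_x (2 * turan_edges (r - 1) (deg g x) + #|T| * deg g x) =
  \sum_x 2 * (deg g x * deg g x).
Proof.
have sum_mem (A : {set T}) c : \sum_x (x \in A) * c = #|A| * c.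
  rewrite -sum_nat_const [RHS]big_mkcond.
  by apply: eq_bigr => x _; case: (x \in A); rewrite ?mul1n.
have : \sum_x (2 * turan_edges (r - 1) (deg g x) + #|T| * deg g x
                + (x \in ~: X) * (b * (a + 1))) =
        \sum_x (2 * (deg g x * deg g x) + (x \in X) * ((r - b) * a)).
  by apply: eq_bigr => x _; apply: twice_turan_deg.
by rewrite !big_split /= !sum_mem cardX cardXC (mulnC (b * _)); apply: addIn.
Qed.

Lemma turan_bounded_nonadj_nbhd :
  (forall x, edges_in g (nbhd g x) <= turan_edges (r - 1) (deg g x)) ->
  forall u w, ~~ g u w -> nbhd g u = nbhd g w.
Proof.
move=> bounded; apply: cover_nonadj_nbhd => //; apply: nbhd_cover => //.
rewrite -sum_twice_turan_deg; apply: leq_sum => x _.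
by rewrite leq_add2r leq_mul2l bounded orbT.
Qed.

Section Multipartite.

Hypothesis nonadj : forall u w, ~~ g u w -> nbhd g u = nbhd g w.

Lemma card_partX x : #|part g x| = a + (x \in X).
Proof. by have := card_part g x; have := degX x; lia. Qed.

Lemma part_subX x : x \in X -> part g x \subset X.
Proof. by move=> xX; apply/subsetP => y; rewrite !inE; apply: contraR; apply: adjX. Qed.

Lemma part_subXC y : y \in ~: X -> part g y \subset ~: X.
Proof.
rewrite inE => yXC; apply/subsetP => x; rewrite !inE; apply: contra => xX.
by rewrite gs adjX.
Qed.

Lemma card_partsX : #|part g @: X| = b.
Proof.
have size_part : {in X, forall x, #|part g x| = a + 1}.
  by move=> x xX; rewrite card_partX xX.
have := card_uniform_parts gi nonadj part_subX size_part.
by rewrite cardX => /eqP; rewrite eqn_pmul2r ?addn1 // => /eqP.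
Qed.

Lemma card_partsXC : #|part g @: ~: X| = r - b.
Proof.
have size_part : {in ~: X, forall x, #|part g x| = a}.
  by move=> x; rewrite inE card_partX => /negPf->; rewrite addn0.
have := card_uniform_parts gi nonadj part_subXC size_part.
by rewrite cardXC => /eqP; rewrite eqn_pmul2r // => /eqP.
Qed.

(* Listing the parts inside X first makes the fibres of [index (part g x) parts]
   match the residue classes mod r in T_r(n). *)
Definition parts := enum (part g @: X) ++ enum (part g @: ~: X).

Lemma uniq_parts : uniq parts.
Proof.
rewrite cat_uniq !enum_uniq andbT /=; apply/hasPn => K.
rewrite !mem_enum => /imsetP[y yXC ->]; apply/imsetP => -[x xX part_yx].
have := part_refl gi x; rewrite -part_yx => /(subsetP (part_subXC yXC)).
by rewrite inE xX.
Qed.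

Lemma part_in_parts x : part g x \in parts.
Proof.
rewrite mem_cat !mem_enum; have [xX|xXC] := boolP (x \in X); first by rewrite imset_f.
by rewrite orbC imset_f ?inE.
Qed.

Lemma card_index_parts_fiber c :
  #|[set x | index (part g x) parts == c]| = #|[set i : 'I_#|T| | i %% r == c]|.
Proof.
have parts_codom : {subset parts <= codom (part g)}.
  by move=> K; rewrite mem_cat !mem_enum => /orP[] /imsetP[x _ ->]; apply: codom_f.
rewrite (card_mod_fiber c (ltnW b_lt_r) n_eq).
rewrite index_part_fiber ?uniq_parts //; last exact: part_in_parts.
rewrite nth_cat -cardE card_partsX; have [c_lt_b|b_le_c] := ltnP c b.
  have /imsetP[x xX ->] : nth set0 (enum (part g @: X)) c \in part g @: X.
    by rewrite -mem_enum mem_nth // -cardE card_partsX.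
  by rewrite card_partX xX (ltn_trans c_lt_b b_lt_r) muln1.
have [c_lt_r|r_le_c] := ltnP c r.
  have /imsetP[x xXC ->] :
      nth set0 (enum (part g @: ~: X)) (c - b) \in part g @: ~: X.
    by rewrite -mem_enum mem_nth // -cardE card_partsXC; lia.
  by rewrite inE in xXC; rewrite card_partX (negPf xXC) muln1.
by rewrite nth_default ?cards0 ?muln0 // -cardE card_partsXC; lia.
Qed.

Lemma nonadj_nbhd_iso_turan : iso_turan g r.
Proof.
have n_gt0 : 0 < #|T| by rewrite n_eq addn_gt0 muln_gt0 a_gt0 ltnW.
have [f [f_bij index_f]] :=
  fiberwise_bijection (Ordinal n_gt0) (esym (card_ord _)) card_index_parts_fiber.
exists f; split=> // x y.
rewrite /turan_rel !index_f (inj_in_eq (@index_inj _ set0 parts)) ?part_in_parts //.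
by rewrite eq_part ?negbK.
Qed.

End Multipartite.

End TuranFamily.

Theorem lemma3p6 (r : nat) (T : finType) (g : rel T) :
  2 <= r -> simple_graph g -> in_family g r -> ~ iso_turan g r ->
  exists u : T, turan_edges (r - 1) (deg g u) < edges_in g (nbhd g u).
Proof.
move=> r_ge2 [gs gi] family not_iso.
have [a_gt0 [X [cardX cardXC adjX degX]]] := in_family_split gs family.
have n_eq := divn_eq #|T| r.
have b_lt_r : #|T| %% r < r by rewrite ltn_mod ltnW.
have [/existsP //|/existsPn not_exceeding] :=
  boolP [exists u, turan_edges (r - 1) (deg g u) < edges_in g (nbhd g u)].
case: not_iso.
apply: (nonadj_nbhd_iso_turan r_ge2 gs gi n_eq b_lt_r a_gt0 cardX cardXC adjX degX).
apply: (turan_bounded_nonadj_nbhd r_ge2 gs gi n_eq b_lt_r a_gt0 cardX cardXC degX).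
by move=> x; rewrite leqNgt not_exceeding.
Qed.
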